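(* Suppose $m$, $n$ are positive integers. Then \[ \sum_{k = 1}^{m} (-1)^{k-1} \binom{m}{k} \frac{1}{k^{n}} = \frac{1}{n!} \sum_{\{A_{1},\dotsc,A_{j}\} \in \Pi(n)} a_{|A_{1}|} \cdots a_{|A_{j}|}, \] where $a_{i} = (i-1)!\, H^{(i)}_{m}$ for each positive integer $i$.
   Context: $\Pi(n)$ is the set of all set partitions of $\{1,\dots,n\}$ into nonempty blocks $A_1,\dots,A_j$ (with $j$ varying), and $|A|$ is the cardinality of $A$. $H^{(i)}_m=\sum_{k=1}^m k^{-i}$ is the generalized harmonic number. *)

From mathcomp Require Import all_boot all_order all_algebra.
Set Implicit Arguments. Unset Strict Implicit. Unset Printing Implicit Defensive.
Import Order.TTheory GRing.Theory Num.Theory.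
Local Open Scope ring_scope.

Definition harm (i m : nat) : rat :=
  \sum_(1 <= k < m.+1) (k%:R ^+ i)^-1.

Definition acoef (m i : nat) : rat := (i.-1)`!%:R * harm i m.

From mathcomp Require Import all_boot all_order all_algebra.
From mathcomp Require Import ring zify.

(* Both sides equal the complete homogeneous sum h_n of 1, 1/2, ..., 1/m.  The
   alternating sum satisfies the same recursion in (m, n) as h_n, namely
   h_n(x_1..x_(m+1)) = h_n(x_1..x_m) + x_(m+1) h_(n-1)(x_1..x_(m+1)).  On the
   partition side, classifying set partitions by the block containing a fixed
   point gives a recursion which Newton's identity k h_k = sum_i p_i h_(k-i)
   (p_i the power sums, here p_i = H^(i)_m) turns into
   sum_P prod_(B in P) (|B|-1)! p_|B| = n! h_n. *)

Set Implicit Arguments. Unset Strict Implicit. Unset Printing Implicit Defensive.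
Import Order.TTheory GRing.Theory Num.Theory.
Local Open Scope ring_scope.

Section PartitionSum.
Variables (R : comNzRingType) (T : finType) (f : nat -> R).

Definition partition_sum (A : {set T}) : R :=
  \sum_(P : {set {set T}} | partition P A) \prod_(B in P) f #|B|.

Lemma partition_sum0 : partition_sum set0 = 1.
Proof.
rewrite /partition_sum (eq_bigl (pred1 set0)) => [|P]; last exact: partition_set0.
by rewrite big_pred1_eq big_set0.
Qed.

Lemma notin_partitionD (A B : {set T}) (Q : {set {set T}}) (x : T) :
  x \in B -> partition Q (A :\: B) -> B \notin Q.
Proof.
move=> xB pQ; apply/negP => /(partitionS pQ)/subsetP/(_ x xB).
by rewrite inE xB.
Qed.

Lemma partitionU1D (A B : {set T}) (Q : {set {set T}}) (x : T) :
  x \in B -> B \subset A -> partition Q (A :\: B) -> partition (B |: Q) A.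
Proof.
move=> xB BA pQ.
have B0 : B != set0 by apply/set0Pn; exists x.
have dB : [disjoint B & A :\: B] by rewrite disjoint_sym disjoints_subset subsetDr.
by rewrite -[X in partition _ X](setID A B) (setIidPr BA) partitionU1.
Qed.

(* Removing the block B containing x leaves an arbitrary partition of A minus B. *)
Lemma partition_sum_pblock (x : T) (A : {set T}) : x \in A ->
  partition_sum A =
  \sum_(B : {set T} | (x \in B) && (B \subset A)) f #|B| * partition_sum (A :\: B).
Proof.
move=> xA; rewrite /partition_sum (partition_big (pblock^~ x)
   (fun B => (x \in B) && (B \subset A))) /=; last first.
  move=> P pP; have xP : x \in cover P by rewrite (cover_partition pP).
  by rewrite mem_pblock xP (partitionS pP) // pblock_mem.
apply: eq_bigr => B /andP[xB BA]; rewrite big_distrr /=.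
rewrite (reindex_onto (fun Q => B |: Q) (fun P => P :\ B)) /=; last first.
  by move=> P /andP[pP /eqP <-]; rewrite setD1K // pblock_mem ?(cover_partition pP).
apply: eq_big => Q; last first.
  move=> /andP[/andP[pP _] /eqP eQ].
  have pQ : partition Q (A :\: B) by rewrite -eQ partitionD1 ?setU11.
  by rewrite big_setU1 //= (notin_partitionD xB pQ).
apply/idP/idP => [/andP[/andP[pP _] /eqP <-]|pQ].
  by rewrite partitionD1 ?setU11.
have pU := partitionU1D xB BA pQ.
rewrite pU (def_pblock (partition_trivIset pU) (setU11 B Q) xB) eqxx /=.
by rewrite setU1K // (notin_partitionD xB pQ).
Qed.

End PartitionSum.

Lemma eq_partition_sum (R : comNzRingType) (T : finType) (f g : nat -> R) (A : {set T}) :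
  f =1 g -> partition_sum f A = partition_sum g A.
Proof.
by move=> fg; apply: eq_bigr => P _; apply: eq_bigr => B _; rewrite fg.
Qed.

Section SubsetSums.
Variables (V : nmodType) (T : finType).

Lemma sum_subsets_card (D : {set T}) (F : nat -> V) :
  \sum_(B : {set T} | B \subset D) F #|B| = \sum_(j < #|D|.+1) F j *+ 'C(#|D|, j).
Proof.
rewrite (partition_big (fun B : {set T} => inord #|B| : 'I_#|D|.+1) xpredT) //=.
apply: eq_bigr => j _; rewrite -(cards_draws D j) -sumr_const.
apply: eq_big => [B|B /andP[BD /eqP <-]]; last by rewrite inordK // ltnS subset_leq_card.
rewrite inE; case BD: (B \subset D) => //=.
by rewrite -val_eqE /= inordK // ltnS subset_leq_card.
Qed.

Lemma sum_subsets_containing (x : T) (A : {set T}) (F : {set T} -> V) : x \in A ->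
  \sum_(B : {set T} | (x \in B) && (B \subset A)) F B =
  \sum_(B : {set T} | B \subset A :\ x) F (x |: B).
Proof.
move=> xA; rewrite (reindex_onto (fun B => x |: B) (fun B => B :\ x)) /=; last first.
  by move=> B /andP[xB _]; rewrite setD1K.
apply: eq_bigl => B; rewrite subsetD1 setU11 subUset sub1set xA /=.
case xB: (x \in B); last by rewrite (setU1K (negbT xB)) eqxx.
rewrite andbF; apply/andP => -[_ /eqP eB].
by move: xB; rewrite -eB setD11.
Qed.

End SubsetSums.

Section CompleteHomogeneous.
Variables (R : comNzRingType) (x : nat -> R).

Fixpoint hsym (m n : nat) : R :=
  if m is m'.+1 then \sum_(j < n.+1) x m ^+ j * hsym m' (n - j)%N else (n == 0)%:R.

Definition psum (j m : nat) : R := \sum_(1 <= i < m.+1) x i ^+ j.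

Lemma hsym0n n : hsym 0 n = (n == 0)%:R. Proof. by []. Qed.

Lemma hsymS m n :
  hsym m.+1 n = \sum_(j < n.+1) x m.+1 ^+ j * hsym m (n - j)%N.
Proof. by []. Qed.

Arguments hsym : simpl never.

Lemma hsymn0 m : hsym m 0 = 1.
Proof. by elim: m => // m IHm; rewrite hsymS big_ord1 IHm mul1r. Qed.

Lemma hsymSS m n : hsym m.+1 n.+1 = hsym m n.+1 + x m.+1 * hsym m.+1 n.
Proof.
rewrite !hsymS big_ord_recl expr0 mul1r subn0 big_distrr; congr (_ + _).
by apply: eq_bigr => j _ /=; rewrite exprS -mulrA.
Qed.

Lemma psumS j m : psum j m.+1 = psum j m + x m.+1 ^+ j.
Proof. by rewrite /psum big_nat_recr. Qed.

Lemma newton_hsym m k :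
  k.+1%:R * hsym m k.+1 = \sum_(j < k.+1) psum j.+1 m * hsym m (k - j)%N.
Proof.
elim: m k => [|m IHm] k.
  by rewrite hsym0n mulr0 big1 // => j _; rewrite /psum big_geq ?mul0r.
set y := x m.+1; set h := hsym m.+1.
have psum_split l : \sum_(j < l.+1) psum j.+1 m.+1 * h (l - j)%N =
    \sum_(j < l.+1) psum j.+1 m * h (l - j)%N + \sum_(j < l.+1) y ^+ j.+1 * h (l - j)%N.
  by rewrite -big_split; apply: eq_bigr => j _; rewrite psumS mulrDl.
elim: k => [|k IHk].
  rewrite psum_split !big_ord1 subnn /h hsymSS !hsymn0 expr1.
  by have := IHm 0%N; rewrite big_ord1 subnn hsymn0 !mulr1 !mul1r => ->.
have old_sum : \sum_(j < k.+2) psum j.+1 m * h (k.+1 - j)%N =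
    k.+2%:R * hsym m k.+2 + y * \sum_(j < k.+1) psum j.+1 m * h (k - j)%N.
  rewrite IHm big_ord_recr /= subnn [in RHS]big_ord_recr /= subnn /h !hsymn0.
  rewrite big_distrr addrAC -big_split; congr (_ + _); apply: eq_bigr => j _ /=.
  by rewrite subSn 1?hsymSS 1?mulrDr 1?mulrCA // -ltnS.
have new_sum : \sum_(j < k.+2) y ^+ j.+1 * h (k.+1 - j)%N =
    y * h k.+1 + y * \sum_(j < k.+1) y ^+ j.+1 * h (k - j)%N.
  rewrite big_ord_recl subn0 expr1; congr (_ + _).
  by rewrite [RHS]big_distrr; apply: eq_bigr => j _ /=; rewrite subSS exprS mulrA.
rewrite psum_split old_sum new_sum addrACA -mulrDr -psum_split -IHk.
by rewrite /h hsymSS -[k.+2%:R]natr1 -/y; ring.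
Qed.

End CompleteHomogeneous.

Section PartitionPowerSums.
Variables (R : comNzRingType) (T : finType) (x : nat -> R) (m : nat).

Definition psum_weight (i : nat) : R := (i.-1)`!%:R * psum x i m.

Lemma partition_sum_psum_weight (A : {set T}) :
  partition_sum psum_weight A = #|A|`!%:R * hsym x m #|A|.
Proof.
have [n] := ubnP #|A|; elim: n A => // n IHn A; rewrite ltnS => An.
have [-> | [a aA]] := set_0Vmem A.
  by rewrite partition_sum0 cards0 hsymn0 mulr1.
rewrite (partition_sum_pblock _ aA) sum_subsets_containing //.
set k := #|A :\ a|; have cardA : #|A| = k.+1 by rewrite (cardsD1 a A) aA.
transitivity (\sum_(B : {set T} | B \subset A :\ a)
    psum_weight #|B|.+1 * ((k - #|B|)`!%:R * hsym x m (k - #|B|))).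
  apply: eq_bigr => B; rewrite subsetD1 => /andP[BA aB].
  have cardD : #|A :\: (a |: B)| = (k - #|B|)%N.
    by rewrite -setDDl cardsD (setIidPr _) // subsetD1 BA.
  by rewrite cardsU1 aB add1n IHn cardD //; move: An; rewrite cardA; lia.
rewrite (sum_subsets_card _
  (fun c => psum_weight c.+1 * ((k - c)`!%:R * hsym x m (k - c)))) -/k cardA.
rewrite factS natrM -mulrA mulrCA newton_hsym big_distrr.
apply: eq_bigr => j _; have jk : (j <= k)%N by rewrite -ltnS.
by rewrite /psum_weight /= -(bin_fact jk) !natrM -mulr_natr; ring.
Qed.

End PartitionPowerSums.

Section AlternatingSum.
Variable R : numFieldType.

Definition altsum (m n : nat) : R :=
  \sum_(k < m) (-1) ^+ k * 'C(m, k.+1)%:R / k.+1%:R ^+ n.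

Lemma altsumS0 m : altsum m.+1 0 = 1.
Proof.
have := exprBn (1 : R) 1 m.+1; rewrite subrr expr0n big_ord_recl /= => /eqP.
rewrite eq_sym addr_eq0 !expr1n !mulr1 bin0 expr0 mulr1n => /eqP ->.
rewrite -sumrN; apply: eq_bigr => k _; rewrite /bump /= add1n !expr1n !mulr1.
by rewrite expr0 divr1 exprS mulN1r mulNrn opprK mulr_natr.
Qed.

Lemma altsumSS m n : altsum m.+1 n.+1 = altsum m n.+1 + altsum m.+1 n / m.+1%:R.
Proof.
have -> : altsum m n.+1 = \sum_(k < m.+1) (-1) ^+ k * 'C(m, k.+1)%:R / k.+1%:R ^+ n.+1.
  by rewrite /altsum big_ord_recr /= bin_small // mulr0 mul0r addr0.
rewrite /altsum mulr_suml -big_split; apply: eq_bigr => k _ /=.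
have m0 : m.+1%:R != 0 :> R by rewrite pnatr_eq0.
have pascal : 'C(m, k.+1)%:R = 'C(m.+1, k.+1)%:R - 'C(m, k)%:R :> R.
  by rewrite binS natrD addrK.
have absorb : 'C(m, k)%:R = k.+1%:R * 'C(m.+1, k.+1)%:R / m.+1%:R :> R.
  by rewrite -natrM -mul_bin_diag natrM [_ * _%:R]mulrC mulfK.
by rewrite pascal absorb exprS; field; rewrite !nat1r m0 expf_neq0 ?pnatr_eq0.
Qed.

Lemma altsum_hsym m n : altsum m.+1 n = hsym (fun i => i%:R^-1) m.+1 n.
Proof.
elim: m n => [|m IHm] n.
  elim: n => [|n IHn]; first by rewrite altsumS0 hsymn0.
  rewrite hsymSS hsym0n add0r invr1 mul1r -IHn /altsum !big_ord1.
  by rewrite !expr1n.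
elim: n => [|n IHn]; first by rewrite altsumS0 hsymn0.
by rewrite altsumSS hsymSS IHm IHn mulrC.
Qed.

End AlternatingSum.

Lemma harmE (i m : nat) : harm i m = psum (fun k => k%:R^-1 : rat) i m.
Proof. by apply: eq_bigr => k _; rewrite exprVn. Qed.

Lemma acoefE (m : nat) : acoef m =1 psum_weight (fun k => k%:R^-1 : rat) m.
Proof. by move=> i; rewrite /acoef harmE. Qed.

Theorem theorem3 (m n : nat) (hm : (0 < m)%N) (hn : (0 < n)%N) :
  \sum_(1 <= k < m.+1) ((-1) ^+ (k.-1) * 'C(m, k)%:R / (k%:R ^+ n) : rat)
  = (n`!%:R)^-1 *
    \sum_(P : {set {set 'I_n}} | partition P [set: 'I_n])
       \prod_(B in P) acoef m #|B|.
Proof.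
case: m hm => // m _; rewrite big_add1 big_mkord -/(altsum _ m.+1 n) altsum_hsym.
rewrite -/(partition_sum (acoef m.+1) [set: 'I_n]) (eq_partition_sum _ (acoefE m.+1)).
rewrite partition_sum_psum_weight cardsT card_ord.
by rewrite mulKf // pnatr_eq0 -lt0n fact_gt0.
Qed.
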